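(* Let $A\subseteq\mathcal{R}$ be outer measurable and let $I$ be an interval in $\mathcal{R}$ with $I\cap A=\emptyset$. Then $A\cup I$ is outer measurable and $M_u(A\cup I)=M_u(A)+l(I)$.
   Context: $\mathcal{R}$ denotes the Levi-Civita field: functions $x:\mathbb{Q}\to\mathbb{R}$ with left-finite support, with componentwise addition and formal power series multiplication, ordered by $x>0$ iff $x\ne0$ and $x[\min\operatorname{supp}x]>0$; it is a non-Archimedean ordered field extension of $\mathbb{R}$, Cauchy complete in the order topology, in which all limits and series are taken (a series $\sum a_n$ converges iff $a_n\to0$). An interval is a set $[a,b],[a,b),(a,b]$ or $(a,b)$ with $a<b$ in $\mathcal{R}$, of length $l=b-a$. A cover of $A\subseteq\mathcal{R}$ is a sequence of intervals $(S_n)_{n\ge1}$ with $A\subseteq\bigcup_n S_n$ and $\sum_n l(S_n)$ convergent in $\mathcal{R}$. $A$ is called outer measurable if the infimum $\inf\{\sum_n l(S_n): (S_n)\text{ a cover of }A\}$ exists in $\mathcal{R}$; this infimum is then called the outer measure $M_u(A)$. *)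

From HB Require Import structures.
From mathcomp Require Import all_boot all_order all_algebra.
From mathcomp Require Import boolp classical_sets functions cardinality reals.
Set Implicit Arguments. Unset Strict Implicit. Unset Printing Implicit Defensive.
Import Order.TTheory GRing.Theory Num.Theory.
Local Open Scope classical_set_scope.
Local Open Scope ring_scope.

Definition left_finite (R : realType) (x : rat -> R) : Prop :=
  forall q : rat, finite_set [set a : rat | x a != 0 /\ a < q].

Record LC (R : realType) := MkLC { lcf : rat -> R ; lcP : left_finite lcf }.
Arguments MkLC {R}.
Arguments lcf {R}.

Definition lc_eq (R : realType) (x y : LC R) : Prop := lcf x = lcf y.

Lemma left_finite0 (R : realType) : left_finite (fun _ : rat => (0 : R)).
Proof.
move=> q; apply: (sub_finite_set (B := set0)); last exact: finite_set0.
by move=> a /= [/eqP].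
Qed.

Lemma left_finiteD (R : realType) (x y : LC R) :
  left_finite (fun q => lcf x q + lcf y q).
Proof.
move=> q; apply: (sub_finite_set (B := [set a | lcf x a != 0 /\ a < q]
   `|` [set a | lcf y a != 0 /\ a < q])); last first.
  by rewrite finite_setU; split; apply: lcP.
move=> a /= [Hn Hq]; case: (eqVneq (lcf x a) 0) => Hx.
  by right; split=> //; move: Hn; rewrite Hx add0r.
by left.
Qed.

Lemma left_finiteN (R : realType) (x : LC R) :
  left_finite (fun q => - lcf x q).
Proof.
move=> q; apply: (sub_finite_set (B := [set a | lcf x a != 0 /\ a < q])).
  by move=> a /= [Hn Hq]; split=> //; rewrite -oppr_eq0.
exact: lcP.
Qed.

Definition lc0 (R : realType) : LC R := MkLC _ (@left_finite0 R).
Definition lc_add (R : realType) (x y : LC R) : LC R :=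
  MkLC _ (left_finiteD x y).
Definition lc_opp (R : realType) (x : LC R) : LC R := MkLC _ (left_finiteN x).
Definition lc_sub (R : realType) (x y : LC R) : LC R := lc_add x (lc_opp y).

(* x > 0 iff x <> 0 and x[min supp x] > 0 : there is a point q with
   x q > 0 and x vanishing below q (so q = min supp x). *)
Definition lc_pos (R : realType) (x : LC R) : Prop :=
  exists q : rat, 0 < lcf x q /\ forall a : rat, a < q -> lcf x a = 0.

Definition lc_lt (R : realType) (x y : LC R) : Prop := lc_pos (lc_sub y x).
Definition lc_le (R : realType) (x y : LC R) : Prop := lc_eq x y \/ lc_lt x y.

Definition lc_limit (R : realType) (u : nat -> LC R) (L : LC R) : Prop :=
  forall eps : LC R, lc_pos eps -> exists N : nat, forall n : nat, (N <= n)%N ->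
    lc_lt (lc_opp eps) (lc_sub (u n) L) /\ lc_lt (lc_sub (u n) L) eps.

Fixpoint lc_psum (R : realType) (u : nat -> LC R) (n : nat) : LC R :=
  match n with
  | O => lc0 R
  | S m => lc_add (lc_psum u m) (u m)
  end.

Definition lc_series_sum (R : realType) (u : nat -> LC R) (s : LC R) : Prop :=
  lc_limit (lc_psum u) s.

Inductive ikind := CC | CO | OC | OO.

(* an interval with endpoints a, b of kind k: [a,b], [a,b), (a,b], (a,b);
   validity (a < b) is required separately by [is_interval]. *)
Record lc_interval (R : realType) := MkInterval
  { ileft : LC R ; iright : LC R ; ikd : ikind }.
Arguments MkInterval {R}.

Definition is_interval (R : realType) (I : lc_interval R) : Prop :=
  lc_lt (ileft I) (iright I).

Definition iset (R : realType) (I : lc_interval R) : set (LC R) :=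
  [set x | match ikd I with
           | CC => lc_le (ileft I) x /\ lc_le x (iright I)
           | CO => lc_le (ileft I) x /\ lc_lt x (iright I)
           | OC => lc_lt (ileft I) x /\ lc_le x (iright I)
           | OO => lc_lt (ileft I) x /\ lc_lt x (iright I)
           end].

Definition ilength (R : realType) (I : lc_interval R) : LC R :=
  lc_sub (iright I) (ileft I).

Definition cover_with_sum (R : realType) (A : set (LC R))
    (S : nat -> lc_interval R) (s : LC R) : Prop :=
  (forall n, is_interval (S n)) /\
  A `<=` \bigcup_n iset (S n) /\
  lc_series_sum (fun n => ilength (S n)) s.

Definition cover_sums (R : realType) (A : set (LC R)) : set (LC R) :=
  [set s | exists S : nat -> lc_interval R, cover_with_sum A S s].

Definition lc_is_inf (R : realType) (V : set (LC R)) (m : LC R) : Prop :=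
  (forall v, V v -> lc_le m v) /\
  (forall m', (forall v, V v -> lc_le m' v) -> lc_le m' m).

Definition outer_measure_is (R : realType) (A : set (LC R)) (m : LC R) : Prop :=
  lc_is_inf (cover_sums A) m.

Definition outer_measurable (R : realType) (A : set (LC R)) : Prop :=
  exists m, outer_measure_is A m.

(* The upper bound: prepending I to a cover of A covers A ∪ I.
   The lower bound: let (S_n) cover A ∪ I with sum s, and let eta > 0.  Pick
   an exponent e beyond the leading exponent of eta (d^e, with d the
   infinitesimal, is [lc_monomial 1 e]) and N such that the lengths of S_n,
   n >= N, vanish up to e.  Each such S_n contains at most one of the
   uncountably many points u + t d^e, 0 < t < 1, so every subinterval of I of
   length at least d^e meets the interior of some S_i, i < N.  Cutting I at the
   S_i one at a time shows that S_0, ..., S_(N-1) overlap I in total length at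
   least l(I) - 2^N d^e.  Replacing each S_i, i < N, by its parts outside I,
   widened by d^e, gives a cover of A with sum at most
   s - l(I) + (2^N + 2N) d^e < s - l(I) + eta. *)

From HB Require Import structures.
From mathcomp Require Import all_boot all_order all_algebra.
From mathcomp Require Import boolp classical_sets functions cardinality reals.
From mathcomp Require Import ereal lebesgue_measure.
From mathcomp Require Import finmap ring lra zify.
Set Implicit Arguments. Unset Strict Implicit. Unset Printing Implicit Defensive.
Import Order.TTheory GRing.Theory Num.Theory.
Local Open Scope classical_set_scope.
Local Open Scope ring_scope.

Lemma seq_has_min d (T : orderType d) (s : seq T) (a : T) : a \in s ->
  exists2 m, m \in s & forall b, b \in s -> (m <= b)%O.
Proof.
case: s => // c s _; elim: s c => [c|c' s IH c].
  by exists c => [|b]; rewrite ?mem_head // mem_seq1 => /eqP ->.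
have [m ms mle] := IH c'; exists (Order.min c m).
  by rewrite /Order.min; case: ifP; rewrite ?mem_head // inE ms orbT.
move=> b; rewrite inE => /predU1P [->|/mle]; first by rewrite ge_min lexx.
by move=> mb; rewrite ge_min mb orbT.
Qed.

Section LeadingCoefficient.
Variable R : realType.
Implicit Types f g h : rat -> R.

Definition lead_pos f := exists q, 0 < f q /\ forall a, a < q -> f a = 0.
Definition lead_nneg f := (forall q, f q = 0) \/ lead_pos f.

Lemma lead_pos_ext f g : lead_pos f -> (forall q, g q = f q) -> lead_pos g.
Proof. by move=> + /funext ->. Qed.

Lemma lead_nneg_ext f g : lead_nneg f -> (forall q, g q = f q) -> lead_nneg g.
Proof. by move=> + /funext ->. Qed.

Lemma lead_posD f g h :
  lead_pos f -> lead_pos g -> (forall q, h q = f q + g q) -> lead_pos h.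
Proof.
move=> [q1 [f1 f0]] [q2 [g2 g0]] E.
case: (ltgtP q1 q2) => [q12|q21|q12]; last subst q2.
- exists q1; rewrite E (g0 q1 q12) addr0; split=> // a aq.
  by rewrite E f0 // g0 ?addr0 //; apply: lt_trans aq q12.
- exists q2; rewrite E (f0 q2 q21) add0r; split=> // a aq.
  by rewrite E f0 ?g0 ?addr0 //; apply: lt_trans aq q21.
- exists q1; rewrite E; split; first exact: addr_gt0.
  by move=> a aq; rewrite E f0 // g0 // addr0.
Qed.

Lemma lead_pos_nnegD f g h :
  lead_pos f -> lead_nneg g -> (forall q, h q = f q + g q) -> lead_pos h.
Proof.
move=> Pf [g0|Pg] E; last exact: lead_posD Pf Pg E.
by apply: lead_pos_ext Pf _ => q; rewrite E g0 addr0.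
Qed.

Lemma lead_nnegD f g h :
  lead_nneg f -> lead_nneg g -> (forall q, h q = f q + g q) -> lead_nneg h.
Proof.
move=> [f0|Pf] Ng E; last by right; apply: lead_pos_nnegD Pf Ng E.
by apply: lead_nneg_ext Ng _ => q; rewrite E f0 add0r.
Qed.

Lemma lead_pos_neq0 f : lead_pos f -> ~ (forall q, f q = 0).
Proof. by move=> [q [fq _]] f0; move: fq; rewrite f0 ltxx. Qed.

Lemma lead_nneg_pos_addF f g :
  lead_nneg f -> lead_pos g -> (forall q, f q + g q = 0) -> False.
Proof.
move=> Nf Pg E; apply: (lead_pos_neq0 (lead_pos_nnegD Pg Nf (h := fun=> 0) _)) => //.
by move=> q; rewrite addrC E.
Qed.

Lemma lead_nneg_sum n (F : nat -> rat -> R) :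
  (forall i, (i < n)%N -> lead_nneg (F i)) -> lead_nneg (fun q => \sum_(i < n) F i q).
Proof.
elim: n => [|n IH] NF; first by left=> q; rewrite big_ord0.
apply: lead_nnegD (IH _) (NF n (ltnSn n)) _ => [i /ltnW /NF //|q].
by rewrite big_ord_recr.
Qed.

(* Left-finiteness makes the support below any point finite, so a nonzero
   [f] has a least support point, whose coefficient carries the sign. *)
Lemma lead_trichotomy f : left_finite f ->
  (forall q, f q = 0) \/ lead_pos f \/ lead_pos (fun q => - f q).
Proof.
move=> lf; have [|/existsNP [a fa]] := pselect (forall q, f q = 0); first by left.
right; pose S := [set b : rat | f b != 0 /\ b < a + 1].
have fS : finite_set S := lf (a + 1).
have aS : a \in fset_set S.
  by rewrite in_fset_set //; apply/mem_set; split; [exact/eqP|rewrite ltrDl].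
have [m] := seq_has_min aS; rewrite in_fset_set // => /set_mem [fm ma] mle.
have f0 : forall b, b < m -> f b = 0.
  move=> b bm; apply/eqP; apply: contraTT (bm) => fb; rewrite -leNgt; apply: mle.
  by rewrite in_fset_set //; apply/mem_set; split=> //; apply: lt_trans bm ma.
case: (ltgtP (f m) 0) => [fm0|fm0|/eqP]; last by rewrite (negbTE fm).
- by right; exists m; rewrite oppr_gt0; split=> // b /f0 ->; rewrite oppr0.
- by left; exists m.
Qed.
End LeadingCoefficient.

Section LeviCivitaOrder.
Variable R : realType.
Implicit Types x y z : LC R.

Lemma lc_ext x y : lcf x = lcf y -> x = y.
Proof.
case: x y => f fP [g gP] /= fg; subst g.
by rewrite (Prop_irrelevance fP gP).
Qed.

Lemma lc_leE x y : lc_le x y <-> lead_nneg (fun q => lcf y q - lcf x q).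
Proof.
split=> [[xy|]|[yx|]]; [|by right|..|by right].
- by left=> q; rewrite xy subrr.
- by left; apply: funext => q; apply/eqP; rewrite eq_sym -subr_eq0 yx.
Qed.

Lemma lc_leVgt x y : lc_le x y \/ lc_lt y x.
Proof.
case: (lead_trichotomy (lcP (lc_sub y x))) => [yx|[yx|xy]].
- by left; apply/lc_leE; left.
- by left; apply/lc_leE; right.
- by right; apply: lead_pos_ext xy _ => q /=; ring.
Qed.

Lemma lc_le_refl x : lc_le x x.
Proof. by left. Qed.

Lemma lc_ltW x y : lc_lt x y -> lc_le x y.
Proof. by right. Qed.

Lemma lc_le_trans x y z : lc_le x y -> lc_le y z -> lc_le x z.
Proof.
by move=> /lc_leE xy /lc_leE yz; apply/lc_leE; apply: lead_nnegD xy yz _ => q; ring.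
Qed.

Lemma lc_lt_le_trans x y z : lc_lt x y -> lc_le y z -> lc_lt x z.
Proof. by move=> xy /lc_leE yz; apply: lead_pos_nnegD xy yz _ => q /=; ring. Qed.

Lemma lc_le_lt_trans x y z : lc_le x y -> lc_lt y z -> lc_lt x z.
Proof. by move=> /lc_leE xy yz; apply: lead_pos_nnegD yz xy _ => q /=; ring. Qed.

Lemma lc_lt_trans x y z : lc_lt x y -> lc_lt y z -> lc_lt x z.
Proof. by move=> xy /lc_ltW; apply: lc_lt_le_trans. Qed.

Lemma lc_lt_irr x : ~ lc_lt x x.
Proof. by move=> xx; apply: lead_pos_neq0 xx _ => q /=; ring. Qed.

Lemma lc_le_gtF x y : lc_le x y -> lc_lt y x -> False.
Proof. by move=> xy /(lc_le_lt_trans xy); apply: lc_lt_irr. Qed.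

Lemma lc_le_anti x y : lc_le x y -> lc_le y x -> x = y.
Proof.
move=> [/lc_ext //|xy] /lc_leE yx; case: (lead_nneg_pos_addF yx xy).
by move=> q /=; ring.
Qed.

Lemma lc_le_neq_lt x y : lc_le x y -> x <> y -> lc_lt x y.
Proof. by case=> // /lc_ext. Qed.

Lemma left_finite_monomial (c : R) (e : rat) :
  left_finite (fun q => if q == e then c else 0).
Proof.
move=> q; apply: (sub_finite_set (B := [set e])) => // a /=.
by case: ifP => [/eqP|_ []] //; rewrite eqxx.
Qed.

Definition lc_monomial (c : R) (e : rat) : LC R := MkLC _ (left_finite_monomial c e).

Lemma lc_monomialE c e q : lcf (lc_monomial c e) q = if q == e then c else 0.
Proof. by []. Qed.

Lemma lc_monomial_pos (c : R) e : 0 < c -> lc_pos (lc_monomial c e).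
Proof.
move=> c0; exists e; rewrite lc_monomialE eqxx; split=> // a ae.
by rewrite lc_monomialE (lt_eqF ae).
Qed.

Lemma lc_le_of_le_add_pos x y :
  (forall eta : LC R, lc_pos eta -> lc_le x (lc_add y eta)) -> lc_le x y.
Proof.
move=> le_eta; case: (lc_leVgt x y) => // - [q [yx yx0]]; exfalso.
pose c := (lcf x q - lcf y q) / 2.
have c0 : 0 < c by rewrite /c; move: yx => /=; lra.
have /lc_leE le_c := le_eta _ (lc_monomial_pos q c0).
have gap : lead_pos (fun r => lcf x r - lcf y r - lcf (lc_monomial c q) r).
  exists q; rewrite lc_monomialE eqxx; split; first by rewrite /c; move: yx => /=; lra.
  by move=> a aq; rewrite lc_monomialE (lt_eqF aq); move: (yx0 a aq) => /= ->; ring.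
by apply: lead_nneg_pos_addF le_c gap _ => r /=; ring.
Qed.

Lemma lcf_psum (u : nat -> LC R) n q :
  lcf (lc_psum u n) q = \sum_(i < n) lcf (u i) q.
Proof. by elim: n => [|n IH]; rewrite ?big_ord0 // big_ord_recr /= IH. Qed.

Lemma lcf_psumD (u : nat -> LC R) m n q : lcf (lc_psum u (m + n)) q =
  lcf (lc_psum u m) q + lcf (lc_psum (fun k => u (m + k)%N) n) q.
Proof. by elim: n => [|n IH]; rewrite ?addn0 ?addr0 // addnS /= IH addrA. Qed.

End LeviCivitaOrder.

Section Clamp.
Variable R : realType.
Implicit Types (x y a b c d lo hi : LC R).

Definition clamp lo hi x :=
  if `[< lc_le x lo >] then lo else if `[< lc_le hi x >] then hi else x.

Lemma clamp_cases lo hi x :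
  (lc_le x lo /\ clamp lo hi x = lo) \/
  (lc_le lo x /\ lc_le x hi /\ clamp lo hi x = x) \/
  (lc_le hi x /\ clamp lo hi x = hi).
Proof.
rewrite /clamp; case: (asboolP (lc_le x lo)) => [|xlo]; first by left.
case: (asboolP (lc_le hi x)) => [|hix]; first by right; right.
by right; left; split; [|split] => //;
  [case: (lc_leVgt lo x) => // /lc_ltW/xlo|case: (lc_leVgt x hi) => // /lc_ltW/hix].
Qed.

Lemma clamp_lo lo hi x : lc_le x lo -> clamp lo hi x = lo.
Proof. by move=> xlo; rewrite /clamp asboolT. Qed.

Lemma clamp_mid lo hi x : lc_le lo x -> lc_le x hi -> clamp lo hi x = x.
Proof.
move=> lox xhi.
by case: (clamp_cases lo hi x) => [[? ->]|[[_ [_ ->]]|[? ->]]] //; apply: lc_le_anti.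
Qed.

Lemma clamp_hi lo hi x : lc_le lo hi -> lc_le hi x -> clamp lo hi x = hi.
Proof.
move=> lohi hix; case: (clamp_cases lo hi x) => [[xlo ->]|[[_ [xhi ->]]|[_ ->]]] //.
- by apply: lc_le_anti lohi (lc_le_trans hix xlo).
- exact: lc_le_anti.
Qed.

Lemma clamp_ge_lo lo hi x : lc_le lo hi -> lc_le lo (clamp lo hi x).
Proof.
by move=> lohi; case: (clamp_cases lo hi x) => [[_ ->]|[[? [_ ->]]|[_ ->]]] //;
  apply: lc_le_refl.
Qed.

Lemma clamp_le_hi lo hi x : lc_le lo hi -> lc_le (clamp lo hi x) hi.
Proof.
by move=> lohi; case: (clamp_cases lo hi x) => [[_ ->]|[[_ [? ->]]|[_ ->]]] //;
  apply: lc_le_refl.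
Qed.

Lemma clamp_mono lo hi x y : lc_le lo hi -> lc_le x y ->
  lc_le (clamp lo hi x) (clamp lo hi y).
Proof.
move=> lohi xy; case: (clamp_cases lo hi x) => [[_ ->]|[[lox [xhi ->]]|[hix ->]]].
- exact: clamp_ge_lo.
- case: (clamp_cases lo hi y) => [[ylo ->]|[[_ [_ ->]]|[_ ->]]] //.
  exact: lc_le_trans xy ylo.
- by rewrite clamp_hi //; [apply: lc_le_refl|apply: lc_le_trans xy].
Qed.

Lemma clamp_ge lo hi x y : lc_le x hi -> lc_le x y -> lc_le x (clamp lo hi y).
Proof.
move=> xhi xy; case: (clamp_cases lo hi y) => [[ylo ->]|[[_ [_ ->]]|[_ ->]]] //.
exact: lc_le_trans xy ylo.
Qed.

Lemma clamp_le lo hi x y : lc_le lo x -> lc_le y x -> lc_le (clamp lo hi y) x.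
Proof.
move=> lox yx; case: (clamp_cases lo hi y) => [[_ ->]|[[_ [_ ->]]|[hiy ->]]] //.
exact: lc_le_trans hiy yx.
Qed.

Lemma lcf_clamp_split a m1 m2 b x : lc_le a m1 -> lc_le m1 m2 -> lc_le m2 b ->
  forall q, lcf (clamp a b x) q = lcf (clamp a m1 x) q + lcf (clamp m1 m2 x) q
     + lcf (clamp m2 b x) q - lcf m1 q - lcf m2 q.
Proof.
move=> am1 m12 m2b q.
have am2 := lc_le_trans am1 m12; have ab := lc_le_trans am2 m2b.
have m1b := lc_le_trans m12 m2b.
case: (lc_leVgt x a) => [xa|/lc_ltW ax].
  rewrite !(clamp_lo _ xa) (clamp_lo _ (lc_le_trans xa am1)).
  by rewrite (clamp_lo _ (lc_le_trans xa am2)); ring.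
case: (lc_leVgt x m1) => [xm1|/lc_ltW m1x].
  rewrite (clamp_mid ax (lc_le_trans xm1 m1b)) (clamp_mid ax xm1) !(clamp_lo _ xm1).
  by rewrite (clamp_lo _ (lc_le_trans xm1 m12)); ring.
case: (lc_leVgt x m2) => [xm2|/lc_ltW m2x].
  rewrite (clamp_mid ax (lc_le_trans xm2 m2b)) (clamp_hi am1 m1x) (clamp_mid m1x xm2).
  by rewrite (clamp_lo _ xm2); ring.
case: (lc_leVgt x b) => [xb|/lc_ltW bx].
  rewrite (clamp_mid ax xb) (clamp_hi am1 m1x) (clamp_hi m12 m2x) (clamp_mid m2x xb).
  by ring.
by rewrite (clamp_hi ab bx) (clamp_hi am1 m1x) (clamp_hi m12 m2x) (clamp_hi m2b bx); ring.
Qed.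

End Clamp.

Section Overlap.
Variable R : realType.
Implicit Types (a b c d : LC R).

(* The coefficient function of the length of [a, b] meet [c, d]. *)
Definition overlap a b c d : rat -> R :=
  fun q => lcf (clamp a b d) q - lcf (clamp a b c) q.

Lemma overlap_nneg a b c d : lc_le a b -> lc_le c d -> lead_nneg (overlap a b c d).
Proof. by move=> ab cd; apply/lc_leE/clamp_mono. Qed.

Lemma overlap_split a m1 m2 b c d : lc_le a m1 -> lc_le m1 m2 -> lc_le m2 b ->
  forall q, overlap a b c d q =
    overlap a m1 c d q + overlap m1 m2 c d q + overlap m2 b c d q.
Proof.
by move=> am1 m12 m2b q; rewrite /overlap !(lcf_clamp_split _ am1 m12 m2b); ring.
Qed.

Lemma overlapC a b c d : lc_le a b -> lc_le c d ->
  forall q, overlap a b c d q = overlap c d a b q.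
Proof.
move=> ab cd q; rewrite /overlap.
case: (lc_leVgt d a) => [da|/lc_ltW ad].
  have ca := lc_le_trans cd da.
  rewrite (clamp_hi cd da) (clamp_lo _ da) (clamp_lo _ ca).
  by rewrite (clamp_hi cd (lc_le_trans da ab)); ring.
case: (lc_leVgt c a) => [ca|/lc_ltW ac].
  rewrite (clamp_mid ca ad) (clamp_lo _ ca).
  case: (lc_leVgt d b) => [db|/lc_ltW bd].
    by rewrite (clamp_mid ad db) (clamp_hi cd db); ring.
  by rewrite (clamp_hi ab bd) (clamp_mid (lc_le_trans ca ab) bd); ring.
rewrite (clamp_lo _ ac).
case: (lc_leVgt d b) => [db|/lc_ltW bd].
  rewrite (clamp_mid (lc_le_trans ac cd) db) (clamp_mid ac (lc_le_trans cd db)).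
  by rewrite (clamp_hi cd db); ring.
rewrite (clamp_hi ab bd).
case: (lc_leVgt c b) => [cb|/lc_ltW bc].
  by rewrite (clamp_mid ac cb) (clamp_mid cb bd); ring.
by rewrite (clamp_hi ab bc) (clamp_lo _ bc); ring.
Qed.

End Overlap.

Section OverlapBound.
Variable R : realType.
Variables (delta : LC R) (lft rgt : nat -> LC R).
Hypothesis delta_pos : lc_pos delta.
Hypothesis lft_le_rgt : forall i, lc_le (lft i) (rgt i).

Definition long_subintervals_meet N a b := forall u v,
  lc_le a u -> lc_lt u v -> lc_le v b -> lc_le delta (lc_sub v u) ->
  exists2 i, (i < N)%N &
    exists y, [/\ lc_lt u y, lc_lt y v, lc_lt (lft i) y & lc_lt y (rgt i)].

Definition overlap_sum N a b q := \sum_(i < N) overlap a b (lft i) (rgt i) q.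

Lemma long_subintervals_meet_left N a b :
  lc_le a b -> long_subintervals_meet N.+1 a b ->
  long_subintervals_meet N a (clamp a b (lft N)).
Proof.
move=> ab long u v au uv vm dvu.
have [i iN [y [uy yv ly yr]]] := long u v au uv (lc_le_trans vm (clamp_le_hi _ ab)) dvu.
case: (ltnP i N) => [iN'|Ni]; first by exists i => //; exists y.
have iE : i = N by apply/eqP; rewrite eqn_leq Ni -ltnS iN.
subst i.
exfalso; move: ly; case: (clamp_cases a b (lft N)) => [[_ E]|[[_ [_ E]]|[bl E]]];
  rewrite E in vm => ly.
- exact: lc_le_gtF (lc_le_trans vm au) uv.
- exact: lc_lt_irr (lc_lt_trans ly (lc_lt_le_trans yv vm)).
- exact: lc_lt_irr (lc_lt_le_trans (lc_lt_trans ly yv) (lc_le_trans vm bl)).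
Qed.

Lemma long_subintervals_meet_right N a b :
  lc_le a b -> long_subintervals_meet N.+1 a b ->
  long_subintervals_meet N (clamp a b (rgt N)) b.
Proof.
move=> ab long u v mu uv vb dvu.
have [i iN [y [uy yv ly yr]]] := long u v (lc_le_trans (clamp_ge_lo _ ab) mu) uv vb dvu.
case: (ltnP i N) => [iN'|Ni]; first by exists i => //; exists y.
have iE : i = N by apply/eqP; rewrite eqn_leq Ni -ltnS iN.
subst i.
exfalso; move: yr; case: (clamp_cases a b (rgt N)) => [[ra E]|[[_ [_ E]]|[br E]]];
  rewrite E in mu => yr.
- exact: lc_lt_irr (lc_lt_trans yr (lc_le_lt_trans (lc_le_trans ra mu) uy)).
- exact: lc_lt_irr (lc_lt_trans yr (lc_le_lt_trans mu uy)).
- exact: lc_le_gtF (lc_le_trans vb mu) uv.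
Qed.

(* Cut [a, b] at the N-th interval: both remaining pieces satisfy the
   hypothesis for the first N intervals, so the slack doubles at each step. *)
Lemma overlap_sum_ge N a b : lc_le a b -> long_subintervals_meet N a b ->
  lead_nneg (fun q => overlap_sum N a b q + 2 ^+ N * lcf delta q - (lcf b q - lcf a q)).
Proof.
elim: N a b => [|N IH] a b ab long.
  case: (lc_leVgt (lc_sub b a) delta) => [/lc_leE|long_ab].
    by move/lead_nneg_ext; apply=> q /=; rewrite /overlap_sum big_ord0 expr0; ring.
  have ablt : lc_lt a b by apply: lead_posD long_ab delta_pos _ => q /=; ring.
  by have [] := long a b (lc_le_refl a) ablt (lc_le_refl b) (lc_ltW long_ab).
pose m1 := clamp a b (lft N); pose m2 := clamp a b (rgt N).
have am1 : lc_le a m1 by apply: clamp_ge_lo.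
have m12 : lc_le m1 m2 by apply: clamp_mono.
have m2b : lc_le m2 b by apply: clamp_le_hi.
have left := IH a m1 am1 (long_subintervals_meet_left ab long).
have right := IH m2 b m2b (long_subintervals_meet_right ab long).
have middle : lead_nneg (overlap_sum N m1 m2).
  apply: (lead_nneg_sum (F := fun i => overlap m1 m2 (lft i) (rgt i))) => i _.
  exact: overlap_nneg.
have := lead_nnegD (lead_nnegD left right (fun=> erefl)) middle (fun=> erefl).
move/lead_nneg_ext; apply=> q.
rewrite /overlap_sum big_ord_recr exprS /=.
under eq_bigr do rewrite (overlap_split _ _ am1 m12 m2b).
rewrite !big_split /= /overlap -/m1 -/m2; ring.
Qed.

End OverlapBound.

Section Series.
Variable R : realType.
Implicit Types (u v : nat -> LC R).

Lemma lc_limit_shift u v L M k j : lc_limit u L ->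
  (forall n q, lcf (v (n + k)%N) q - lcf M q = lcf (u (n + j)%N) q - lcf L q) ->
  lc_limit v M.
Proof.
move=> uL E eps eps_pos; have [N HN] := uL eps eps_pos.
exists (N + k)%N => n nN; have := E (n - k)%N; rewrite subnK; last by lia.
have [lo hi] := HN (n - k + j)%N ltac:(lia).
move=> En; split; [apply: lead_pos_ext lo _|apply: lead_pos_ext hi _];
  by move=> q /=; rewrite En.
Qed.

Lemma lead_pos_vanish_below (g : rat -> R) c e e' : lead_pos g ->
  lead_pos (fun q => lcf (lc_monomial c e') q - g q) -> e < e' ->
  forall q, q <= e -> g q = 0.
Proof.
move=> [q1 [g1 g0]] [q2 [d2 d0]] ee'.
suff eq1 : e < q1 by move=> q qe; apply: g0; apply: le_lt_trans qe eq1.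
rewrite ltNge; apply/negP => q1e; have q1e' := le_lt_trans q1e ee'.
have d1 : lcf (lc_monomial c e') q1 - g q1 < 0.
  by rewrite lc_monomialE (lt_eqF q1e') sub0r oppr_lt0.
case: (ltgtP q1 q2) => [q12|q21|q12].
- by move: d1; rewrite d0 // ltxx.
- by move: d2; rewrite lc_monomialE (lt_eqF (lt_trans q21 q1e')) g0 // subrr ltxx.
- by move: d2; rewrite -q12 => /(lt_trans d1); rewrite ltxx.
Qed.

(* Consecutive partial sums eventually lie within [d^(e+1)] of the limit,
   so the terms are eventually below [2 d^(e+1)]. *)
Lemma series_terms_vanish u s e : lc_series_sum u s -> (forall n, lc_pos (u n)) ->
  exists N, forall n, (N <= n)%N -> forall q, q <= e -> lcf (u n) q = 0.
Proof.
move=> us u_pos; have [N HN] := us _ (lc_monomial_pos (e + 1) (@ltr01 R)).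
exists N => n nN; have [lo _] := HN n nN; have [_ hi] := HN n.+1 (leqW nN).
apply: (@lead_pos_vanish_below _ 2 e (e + 1)); [exact: u_pos| |by rewrite ltrDl].
by apply: lead_posD lo hi _ => q /=; case: (q == e + 1); ring.
Qed.

Lemma lead_pos_sub_vanishing (eta g : rat -> R) q0 e :
  0 < eta q0 -> (forall a, a < q0 -> eta a = 0) -> q0 <= e ->
  (forall q, q <= e -> g q = 0) -> lead_pos (fun q => eta q - g q).
Proof.
move=> eta0 eta_below q0e g0; exists q0; rewrite g0 // subr0; split=> // a aq.
by rewrite eta_below // g0 ?subr0 //; apply/ltW/(lt_le_trans aq).
Qed.

End Series.

Lemma subsingleton_finite T (A : set T) : is_subset1 A -> finite_set A.
Proof.
move=> A1; have [[t At]|/forallNP A0] := pselect (exists t, A t).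
  by apply: (sub_finite_set (B := [set t])) => // s As; apply: A1.
by apply: (sub_finite_set (B := set0)) => // s /A0.
Qed.

Lemma exists_notin_countable (R : realType) (C : set R) :
  countable C -> exists2 t : R, 0 < t < 1 & ~ C t.
Proof.
move=> cC; apply: contrapT => /forall2NP inC.
have : countable (`]0, 1[ : set R).
  apply: sub_countable cC; apply: subset_card_le => t.
  by rewrite /= in_itv /= => t01; have [/(_ t01)|/contrapT] := inC t.
move/(@countable_lebesgue_measure0 R); rewrite lebesgue_measure_itv /=.
by rewrite lte_fin ltr01 oppr0 adde0 => /eqP; rewrite onee_eq0.
Qed.

Section Intervals.
Variable R : realType.
Implicit Types (J : lc_interval R) (x : LC R).

Lemma iset_bounds J x : iset J x -> lc_le (ileft J) x /\ lc_le x (iright J).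
Proof. by rewrite /iset; case: (ikd J) => -[lx xr]; split=> //; apply: lc_ltW. Qed.

Lemma iset_of_lt J x : lc_lt (ileft J) x -> lc_lt x (iright J) -> iset J x.
Proof. by move=> lx xr; rewrite /iset; case: (ikd J); split=> //; apply: lc_ltW. Qed.

Lemma notin_iset J x : ~ iset J x -> lc_le x (ileft J) \/ lc_le (iright J) x.
Proof.
move=> xJ; case: (lc_leVgt x (ileft J)) => [|lx]; first by left.
case: (lc_leVgt (iright J) x) => [|xr]; first by right.
by case: xJ; apply: iset_of_lt.
Qed.

Lemma short_iset_subsingleton (u : LC R) e J :
  (forall q, q <= e -> lcf (ilength J) q = 0) ->
  is_subset1 [set t : R | iset J (lc_add u (lc_monomial t e))].
Proof.
move=> short; suff lt_false t1 t2 : iset J (lc_add u (lc_monomial t1 e)) ->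
    iset J (lc_add u (lc_monomial t2 e)) -> t1 < t2 -> False.
  by move=> t1 t2 J1 J2; case: (ltgtP t1 t2) => // t12; [case: (lt_false t1 t2)|
    case: (lt_false t2 t1)].
move=> /iset_bounds [/lc_leE le1 _] /iset_bounds [_ /lc_leE le2] t12.
have long : lead_pos (fun q => lcf (lc_monomial (t2 - t1) e) q - lcf (ilength J) q).
  apply: (@lead_pos_sub_vanishing _ _ _ e e) => //.
  - by rewrite lc_monomialE eqxx subr_gt0.
  - by move=> a ae; rewrite lc_monomialE (lt_eqF ae).
apply: lead_nneg_pos_addF (lead_nnegD le1 le2 (fun=> erefl)) long _ => q /=.
by case: (q == e); ring.
Qed.

End Intervals.

(* The parameters t to avoid form a countable set: each tail interval contains
   at most one point [u + t d^e], and each endpoint equals at most one. *)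
Lemma cover_long_subintervals_meet (R : realType) (I : lc_interval R)
    (S : nat -> lc_interval R) (e : rat) N :
  iset I `<=` \bigcup_n iset (S n) ->
  (forall n, (N <= n)%N -> forall q, q <= e -> lcf (ilength (S n)) q = 0) ->
  long_subintervals_meet (lc_monomial 1 e) (fun i => ileft (S i))
    (fun i => iright (S i)) N (ileft I) (iright I).
Proof.
move=> cov short u v au uv vb dvu.
pose x t := lc_add u (lc_monomial t e).
have x_inj : injective x.
  by move=> t1 t2 /(congr1 (fun y => lcf y e)) /=; rewrite eqxx; apply: addrI.
pose bad n := [set t | (N <= n)%N /\ iset (S n) (x t)] `|`
  [set t | x t = ileft (S n)] `|` [set t | x t = iright (S n)].
have bad_countable : countable (\bigcup_n bad n).
  apply: bigcup_countable => // n _; apply: finite_set_countable.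
  rewrite !finite_setU; split; [split|]; apply: subsingleton_finite.
  - move=> t1 t2 [nN J1] [_ J2].
    by apply: (short_iset_subsingleton (short n nN) J1 J2).
  - by move=> t1 t2 E1 E2; apply: x_inj; rewrite E1 E2.
  - by move=> t1 t2 E1 E2; apply: x_inj; rewrite E1 E2.
have [t /andP [t0 t1] good] := exists_notin_countable bad_countable.
have ut : lc_lt u (x t).
  by apply: lead_pos_ext (lc_monomial_pos e t0) _ => q /=; ring.
have tv : lc_lt (x t) v.
  have /lc_leE long := dvu; have t1' : 0 < 1 - t by rewrite subr_gt0.
  apply: lead_pos_nnegD (lc_monomial_pos e t1') long _ => q /=.
  by case: (q == e); ring.
have xI := iset_of_lt (lc_le_lt_trans au ut) (lc_lt_le_trans tv vb).
have [n _ xn] := cov (x t) xI.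
case: (ltnP n N) => [nN|Nn]; last by case: good; exists n => //; left; left.
exists n => //; exists (x t); split=> //; have [lx xr] := iset_bounds xn.
- by apply: (lc_le_neq_lt lx) => E; apply: good; exists n => //; left; right.
- by apply: (lc_le_neq_lt xr) => E; apply: good; exists n => //; right.
Qed.

Section TrimmedCover.
Variables (R : realType) (I : lc_interval R) (S : nat -> lc_interval R).
Variables (N : nat) (delta : LC R).
Hypothesis delta_pos : lc_pos delta.
Hypothesis I_int : is_interval I.
Hypothesis S_int : forall n, is_interval (S n).

Let lft n := ileft (S n).
Let rgt n := iright (S n).

(* Index k < N carries the part of [S k] left of [I], N <= k < 2N the part
   of [S (k - N)] right of [I], both widened by [delta]; beyond that the
   tail [S n], n >= N, is kept. *)
Definition trimmed_cover k : lc_interval R :=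
  if (k < N)%N then
    MkInterval (lft k) (lc_add (clamp (lft k) (rgt k) (ileft I)) delta) CC
  else if (k < N + N)%N then
    MkInterval (lc_sub (clamp (lft (k - N)) (rgt (k - N)) (iright I)) delta)
      (rgt (k - N)) CC
  else S (k - N).

Definition trimmed_sum s := lc_sub
  (lc_add (lc_psum (fun k => ilength (trimmed_cover k)) (N + N)) s)
  (lc_psum (fun n => ilength (S n)) N).

Lemma trimmed_cover_tail n : trimmed_cover (n + (N + N)) = S (n + N).
Proof.
rewrite /trimmed_cover ifF; last by apply/negbTE; rewrite -leqNgt; lia.
by rewrite ifF; [congr S; lia|apply/negbTE; rewrite -leqNgt; lia].
Qed.

Lemma trimmed_cover_interval k : is_interval (trimmed_cover k).
Proof.
have lr i : lc_le (lft i) (rgt i) by apply: lc_ltW; apply: S_int.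
rewrite /trimmed_cover; case: ifP => k1; [|case: ifP => k2]; last exact: S_int.
- have /lc_leE le := clamp_ge_lo (ileft I) (lr k).
  by apply: lead_pos_nnegD delta_pos le _ => q /=; ring.
- have /lc_leE le := clamp_le_hi (iright I) (lr (k - N)%N).
  by apply: lead_pos_nnegD delta_pos le _ => q /=; ring.
Qed.

Lemma trimmed_cover_covers (A : set (LC R)) :
  (A `|` iset I) `<=` \bigcup_n iset (S n) -> iset I `&` A = set0 ->
  A `<=` \bigcup_k iset (trimmed_cover k).
Proof.
move=> cov disj x Ax; have [n _ xn] := cov x (or_introl Ax).
have [lx xr] := iset_bounds xn.
case: (ltnP n N) => [nN|Nn]; last first.
  by exists (n - N + (N + N))%N => //; rewrite trimmed_cover_tail subnK.
have up y : lc_le y (lc_add y delta).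
  by apply/lc_leE; right; apply: lead_pos_ext delta_pos _ => q /=; ring.
have down y : lc_le (lc_sub y delta) y.
  by apply/lc_leE; right; apply: lead_pos_ext delta_pos _ => q /=; ring.
have xI : ~ iset I x by move=> xI; have : (iset I `&` A) x by []; rewrite disj.
case: (notin_iset xI) => [xa|bx].
  exists n => //; rewrite /trimmed_cover nN; split=> //.
  by apply: lc_le_trans (up _); apply: clamp_ge.
exists (N + n)%N => //; rewrite /trimmed_cover ltnNge leq_addr ltn_add2l nN addKn.
by split=> //; apply: lc_le_trans (down _) _; apply: clamp_le.
Qed.

Lemma trimmed_cover_sum s : lc_series_sum (fun n => ilength (S n)) s ->
  lc_series_sum (fun k => ilength (trimmed_cover k)) (trimmed_sum s).
Proof.
move=> Ss; apply: (lc_limit_shift (k := N + N) (j := N) Ss) => n q.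
suff -> : lcf (lc_psum (fun k => ilength (trimmed_cover k)) (n + (N + N))) q =
  lcf (lc_psum (fun k => ilength (trimmed_cover k)) (N + N)) q
  + lcf (lc_psum (fun n => ilength (S n)) (n + N)) q
  - lcf (lc_psum (fun n => ilength (S n)) N) q by rewrite /=; ring.
elim: n => [|n IH]; first by rewrite !add0n; ring.
by rewrite !addSn /= IH trimmed_cover_tail; ring.
Qed.

Lemma lcf_trimmed_sum s q : lcf (trimmed_sum s) q = lcf s q
  - overlap_sum lft rgt N (ileft I) (iright I) q + N%:R * (2 * lcf delta q).
Proof.
have ab : lc_le (ileft I) (iright I) by apply: lc_ltW.
have piece (i : 'I_N) :
    lcf (ilength (trimmed_cover i)) q + lcf (ilength (trimmed_cover (N + i))) q =
    lcf (ilength (S i)) q - overlap (ileft I) (iright I) (lft i) (rgt i) q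
    + 2 * lcf delta q.
  rewrite (overlapC ab (lc_ltW (S_int i))) /trimmed_cover ltn_ord.
  by rewrite ltnNge leq_addr ltn_add2l ltn_ord addKn /overlap /=; ring.
rewrite /= lcf_psumD !lcf_psum -big_split (eq_bigr _ (fun i _ => piece i)).
rewrite /overlap_sum 2!big_split /= sumrN sumr_const card_ord.
by rewrite [N%:R * _]mulr_natl; ring.
Qed.

Lemma cover_sums_trimmed (A : set (LC R)) s :
  cover_with_sum (A `|` iset I) S s -> iset I `&` A = set0 ->
  cover_sums A (trimmed_sum s).
Proof.
move=> [_ [cov Ss]] disj; exists trimmed_cover.
by split; [|split]; [apply: trimmed_cover_interval|apply: trimmed_cover_covers|
  apply: trimmed_cover_sum].
Qed.

End TrimmedCover.

Section OuterMeasureUnion.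
Variables (R : realType) (A : set (LC R)) (I : lc_interval R) (mA : LC R).
Hypothesis mA_inf : lc_is_inf (cover_sums A) mA.
Hypothesis I_int : is_interval I.

Lemma cover_sums_prepend t : cover_sums A t ->
  cover_sums (A `|` iset I) (lc_add (ilength I) t).
Proof.
move=> [T [T_int [Tcov Tsum]]].
exists (fun n => if n is k.+1 then T k else I); split; first by case.
split=> [x [/Tcov [n _ xn]|xI]|]; first by exists n.+1.
  by exists 0%N.
apply: (lc_limit_shift (k := 1) (j := 0) Tsum) => n q.
by rewrite addn1 addn0 !lcf_psum big_ord_recl /=; ring.
Qed.

Lemma union_lb_le m :
  (forall v, cover_sums (A `|` iset I) v -> lc_le m v) ->
  lc_le m (lc_add mA (ilength I)).
Proof.
move=> m_lb; suff /lc_leE le : lc_le (lc_sub m (ilength I)) mA.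
  by apply/lc_leE; apply: lead_nneg_ext le _ => q /=; ring.
apply: mA_inf.2 => t /cover_sums_prepend /m_lb /lc_leE le.
by apply/lc_leE; apply: lead_nneg_ext le _ => q /=; ring.
Qed.

Lemma union_cover_ge S s : iset I `&` A = set0 ->
  cover_with_sum (A `|` iset I) S s -> lc_le (lc_add mA (ilength I)) s.
Proof.
move=> disj Scover; have [S_int [Scov Ssum]] := Scover.
suff /lc_leE le : lc_le mA (lc_sub s (ilength I)).
  by apply/lc_leE; apply: lead_nneg_ext le _ => q /=; ring.
apply: lc_le_of_le_add_pos => eta [q0 [eta0 eta_below]].
pose e := q0 + 1; pose delta : LC R := lc_monomial 1 e.
have delta_pos : lc_pos delta by apply: lc_monomial_pos.
have [N short] := series_terms_vanish e Ssum S_int.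
have long := cover_long_subintervals_meet (fun x xI => Scov x (or_intror xI)) short.
have overlap_ge :=
  overlap_sum_ge delta_pos (fun i => lc_ltW (S_int i)) (lc_ltW I_int) long.
have mA_le := mA_inf.1 _ (cover_sums_trimmed N delta_pos S_int Scover disj).
apply: lc_le_trans mA_le _; apply/lc_leE; right.
have small :
    lead_pos (fun q => lcf eta q - lcf (lc_monomial (2 ^+ N + N%:R * 2) e) q).
  apply: (lead_pos_sub_vanishing eta0 eta_below (lexx q0)) => q qq0.
  by rewrite lc_monomialE; case: eqP => // qe; rewrite qe /e gerDl ler10 in qq0.
apply: lead_pos_nnegD small overlap_ge _ => q.
by rewrite (lcf_trimmed_sum N delta I_int S_int) /=; case: (q == e); ring.
Qed.

End OuterMeasureUnion.

Unset Implicit Arguments.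
Theorem mainTheorem6 (R : realType) (A : set (LC R)) (I : lc_interval R) (mA : LC R) :
  outer_measure_is A mA ->
  is_interval I ->
  iset I `&` A = set0 ->
  outer_measurable (A `|` iset I) /\
  outer_measure_is (A `|` iset I) (lc_add mA (ilength I)).
Proof.
move=> mA_inf I_int disj.
suff inf : outer_measure_is (A `|` iset I) (lc_add mA (ilength I)).
  by split=> //; exists (lc_add mA (ilength I)).
split; last exact: union_lb_le.
by move=> v [S cov]; apply: union_cover_ge cov.
Qed.
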